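(* A permutation $\sigma$ of $\mathcal M$ preserves the relation $z=\pm x\pm y$ if and only if $\sigma\in GL^\pm(\mathcal M)$.
   Context: $\mathcal M$ denotes the $\mathbb Q$-vector space $\mathbb Q^{<\omega}$ of all sequences of rationals with only finitely many nonzero terms, with zero vector $\vec 0$. The relation $z=\pm x\pm y$ is $\{(x,y,z): z\in\{x+y,x-y,-x+y,-x-y\}\}$; $\sigma$ preserves it if $(a,b,c)$ belongs to it iff $(\sigma a,\sigma b,\sigma c)$ does. $GL(\mathcal M)$ is the group of invertible $\mathbb Q$-linear maps of $\mathcal M$; $S^\pm(\mathcal M)$ is the group of permutations $\sigma$ of $\mathcal M$ with $\sigma(x)\in\{x,-x\}$ for every $x\in\mathcal M$; $GL^\pm(\mathcal M)$ is the group generated by $GL(\mathcal M)\cup S^\pm(\mathcal M)$. *)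

From HB Require Import structures.
From mathcomp Require Import all_boot all_order all_algebra.
Set Implicit Arguments. Unset Strict Implicit. Unset Printing Implicit Defensive.
Import Order.TTheory GRing.Theory Num.Theory.
Local Open Scope ring_scope.

(* M = Q^{<omega}: sequences of rationals with finitely many nonzero terms *)
Definition fin_supp (f : nat -> rat) : Prop :=
  exists N : nat, forall n : nat, (N <= n)%N -> f n = 0.

Definition M : Type := {f : nat -> rat | fin_supp f}.

Lemma fin_supp0 : fin_supp (fun _ => 0).
Proof. by exists 0%N. Qed.

Lemma fin_suppD (f g : nat -> rat) :
  fin_supp f -> fin_supp g -> fin_supp (fun n => f n + g n).
Proof.
move=> [N1 H1] [N2 H2]; exists (maxn N1 N2) => n Hn.
rewrite H1 ?H2 ?addr0 //; apply: leq_trans Hn;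
  by rewrite ?leq_maxl ?leq_maxr.
Qed.

Lemma fin_suppZ (c : rat) (f : nat -> rat) :
  fin_supp f -> fin_supp (fun n => c * f n).
Proof. by move=> [N H]; exists N => n Hn; rewrite H // mulr0. Qed.

Definition mzero : M := exist _ (fun _ => 0) fin_supp0.
Definition madd (x y : M) : M :=
  exist _ (fun n => proj1_sig x n + proj1_sig y n)
        (fin_suppD (proj2_sig x) (proj2_sig y)).
Definition mscale (c : rat) (x : M) : M :=
  exist _ (fun n => c * proj1_sig x n) (fin_suppZ c (proj2_sig x)).
Definition mopp (x : M) : M := mscale (-1) x.

Definition pm_rel (x y z : M) : Prop :=
  z = madd x y \/ z = madd x (mopp y) \/
  z = madd (mopp x) y \/ z = madd (mopp x) (mopp y).

Definition preserves_pm (s : M -> M) : Prop :=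
  forall a b c : M, pm_rel a b c <-> pm_rel (s a) (s b) (s c).

Definition is_perm (s : M -> M) : Prop := bijective s.

Definition in_GL (s : M -> M) : Prop :=
  bijective s /\
  (forall x y : M, s (madd x y) = madd (s x) (s y)) /\
  (forall (c : rat) (x : M), s (mscale c x) = mscale c (s x)).

Definition in_Spm (s : M -> M) : Prop :=
  bijective s /\ forall x : M, s x = x \/ s x = mopp x.

(* GL^pm(M): the group generated by GL(M) u S^pm(M).  Both are subgroups
   (closed under inverses), so the generated group consists of the finite
   composites of their elements. *)
Inductive in_GLpm : (M -> M) -> Prop :=
  | GLpm_id (s : M -> M) : (forall x, s x = x) -> in_GLpm s
  | GLpm_comp (g h s : M -> M) :
      (in_GL g \/ in_Spm g) -> in_GLpm h ->
      (forall x, s x = g (h x)) -> in_GLpm s.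

From HB Require Import structures.
From mathcomp Require Import all_boot all_order all_algebra.
From mathcomp Require Import ring lra.
From Stdlib Require Import FunctionalExtensionality ProofIrrelevance ClassicalEpsilon.
Set Implicit Arguments. Unset Strict Implicit. Unset Printing Implicit Defensive.
Import Order.TTheory GRing.Theory Num.Theory.
Local Open Scope ring_scope.

(* A permutation s preserving z = ±x±y fixes 0 and preserves the relation
   y = ±x in both directions; comparing s((n+2)x) with s((n+1)x) ± s(x) then
   gives s(qx) = ±q s(x) for every rational q.  Put b_0 = s(e_0) and
   b_n = ±s(e_n), the sign chosen so that b_0 + b_n = ±s(e_0 + e_n), and let
   F be the linear map with F(e_n) = b_n.  By induction on the support,
   F(x) = ±s(x) for every x: writing x = (v - c e_0) + c e_0 + c e_N, the two
   bracketings of this sum express s(x) as signed sums of values of F, and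
   these are compatible only when both signs are +.  Hence F is invertible,
   s ∘ F⁻¹ lies in S^±(M), and s = (s ∘ F⁻¹) ∘ F. *)

Lemma M_ext (x y : M) : (forall n, sval x n = sval y n) -> x = y.
Proof.
case: x => f hf; case: y => g hg /= fg.
have efg : f = g by apply: functional_extensionality.
by subst g; rewrite (proof_irrelevance _ hf hg).
Qed.

Ltac M_ring := apply: M_ext => ? /=; ring.

Lemma mscalerA a b x : mscale a (mscale b x) = mscale (a * b) x.
Proof. by M_ring. Qed.

Lemma mscale1r x : mscale 1 x = x.
Proof. by M_ring. Qed.

Lemma mscale0r x : mscale 0 x = mzero.
Proof. by M_ring. Qed.

Lemma mscaler0 c : mscale c mzero = mzero.
Proof. by M_ring. Qed.

Definition is_sign (t : rat) := t = 1 \/ t = -1.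

Lemma is_signM t u : is_sign t -> is_sign u -> is_sign (t * u).
Proof. by case=> ->; case=> ->; rewrite /is_sign; [left|right|right|left]; ring. Qed.

Lemma is_sign_sqr t : is_sign t -> t * t = 1.
Proof. by case=> ->; ring. Qed.

Lemma is_sign_eqVN t u : is_sign t -> is_sign u -> t = u \/ t = - u.
Proof. by case=> ->; case=> ->; [left|right|right|left]; ring. Qed.

Definition sim (x y : M) := exists2 t, is_sign t & y = mscale t x.

Lemma simE x y : sim x y <-> y = x \/ y = mopp x.
Proof.
split.
- by case=> t [] -> ->; [left; rewrite mscale1r | right].
- by case=> ->; [exists 1; [left | rewrite mscale1r] | exists (-1); [right |]].
Qed.

Lemma sim_refl x : sim x x.
Proof. by apply/simE; left. Qed.

Lemma sim_opp x : sim x (mopp x).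
Proof. by apply/simE; right. Qed.

Lemma sim_sym x y : sim x y -> sim y x.
Proof. by case=> t st ->; exists t; rewrite // mscalerA is_sign_sqr // mscale1r. Qed.

Lemma sim_trans x y z : sim x y -> sim y z -> sim x z.
Proof.
by case=> t st -> [u su ->]; exists (u * t); rewrite ?mscalerA //; apply: is_signM.
Qed.

Lemma sim_scale c x y : sim x y -> sim (mscale c x) (mscale c y).
Proof. by case=> t st ->; exists t => //; M_ring. Qed.

Lemma sim0 y : sim mzero y -> y = mzero.
Proof. by case=> t _ ->; rewrite mscaler0. Qed.

Lemma sim_mscale a b x :
  sim (mscale a x) (mscale b x) -> [\/ a = b, a = - b | x = mzero].
Proof.
case=> t st e; have [b_ta | b_nta] := eqVneq b (t * a).
  by case: st b_ta => -> ->; [constructor 1 | constructor 2]; ring.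
constructor 3; apply: M_ext => k /=.
have /= ek := congr1 (fun z => sval z k) e.
have : (b - t * a) * sval x k = 0 by rewrite mulrBl ek; ring.
by move/eqP; rewrite mulf_eq0 subr_eq0 (negPf b_nta) => /eqP.
Qed.

Lemma pm_relE a b c : pm_rel a b c <->
  exists t u, [/\ is_sign t, is_sign u & c = madd (mscale t a) (mscale u b)].
Proof.
split.
- case=> [|[|[|]]] ->;
    [exists 1, 1 | exists 1, (-1) | exists (-1), 1 | exists (-1), (-1)];
    (split; [by rewrite /is_sign; auto | by rewrite /is_sign; auto | M_ring]).
- case=> t [u [[] -> [] -> ->]]; rewrite /pm_rel;
    [left | right; left | right; right; left | right; right; right]; M_ring.
Qed.

Lemma pm_rel_sim a b c a' b' c' :
  sim a a' -> sim b b' -> sim c c' -> pm_rel a b c -> pm_rel a' b' c'.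
Proof.
move=> /sim_sym [ta sta ->] /sim_sym [tb stb ->] [tc stc ->].
case/pm_relE=> t [u [st su ->]]; apply/pm_relE.
by exists (tc * t * ta), (tc * u * tb); split; [repeat apply: is_signM.. | M_ring].
Qed.

Lemma pm_rel_sim_add a b c x y : pm_rel a b c -> sim x a -> sim y b ->
  sim (madd x y) c \/ sim (madd x (mopp y)) c.
Proof.
case/pm_relE=> t [u [st su ->]] [ta sta ->] [tb stb ->].
have [e|e] := is_sign_eqVN (is_signM st sta) (is_signM su stb); [left|right];
  exists (t * ta); try exact: is_signM; apply: M_ext => k /=.
- by rewrite mulrA (mulrA u) -e; ring.
- by rewrite mulrA (mulrA u) e; ring.
Qed.

Lemma pm_rel0 x z : pm_rel x mzero z <-> sim x z.
Proof.
rewrite pm_relE; split.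
- by case=> t [u [st _ ->]]; exists t => //; M_ring.
- by case=> t st ->; exists t, 1; split => //; [left | M_ring].
Qed.

Lemma in_GL_preserves g : in_GL g -> preserves_pm g.
Proof.
case=> [[g_inv gK _] [gD gZ]] a b c; rewrite !pm_relE.
split=> -[t [u [st su e]]]; exists t, u; split=> //.
- by rewrite e gD !gZ.
- by apply: (can_inj gK); rewrite gD !gZ.
Qed.

Lemma in_Spm_preserves g : in_Spm g -> preserves_pm g.
Proof.
case=> _ gpm a b c; have gs x : sim x (g x) by apply/simE.
by split; apply: pm_rel_sim => //; apply: sim_sym.
Qed.

Lemma in_GLpm_preserves s : in_GLpm s -> preserves_pm s.
Proof.
elim=> [{}s sid | g h {}s gP _ hP sE] a b c; first by rewrite !sid.
have gpm : preserves_pm g by case: gP; [apply: in_GL_preserves | apply: in_Spm_preserves].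
by rewrite !sE hP gpm.
Qed.

Lemma ge0_rat_frac (q : rat) :
  0 <= q -> exists k d : nat, (0 < d)%N /\ q = k%:R / d%:R.
Proof.
move=> q_ge0; rewrite -(divq_num_den q).
have := denq_gt0 q; have := q_ge0; rewrite -numq_ge0.
by case: (numq q) => [k|k] // _; case: (denq q) => [d|d] // d_gt0; exists k, d.
Qed.

Definition ev (n : nat) : M.
Proof.
exists (fun k => if k == n then 1 else 0); exists n.+1 => k.
by case: eqP => // ->; rewrite ltnn.
Defined.

Definition supp (N : nat) (x : M) := forall n, (N <= n)%N -> sval x n = 0.

Lemma supp_ev n : supp n.+1 (ev n).
Proof. by move=> k /=; case: eqP => // ->; rewrite ltnn. Qed.

Lemma nsim_supp N x y : supp N x -> sval y N != 0 -> ~ sim x y.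
Proof. by move=> sx yN0 [t _ ey]; move: yN0; rewrite ey /= sx // mulr0 eqxx. Qed.

Definition supp_bound (x : M) : nat :=
  sval (constructive_indefinite_description _ (svalP x)).

Lemma supp_boundP x : supp (supp_bound x) x.
Proof. by rewrite /supp_bound; case: constructive_indefinite_description. Qed.

Section Preserving.

Variable s : M -> M.
Hypothesis spm : preserves_pm s.

Lemma s0 : s mzero = mzero.
Proof.
have /spm/pm_relE [t [u [[] -> [] -> e]]] : pm_rel mzero mzero mzero by left; M_ring.
all: by apply: M_ext => k; move/(congr1 (fun z => sval z k)): e => /=; lra.
Qed.

Lemma sim_s x z : sim (s x) (s z) <-> sim x z.
Proof. by rewrite -(pm_rel0 x z) (spm x mzero z) s0 pm_rel0. Qed.

Lemma s_eq0 x : s x = mzero -> x = mzero.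
Proof. by move=> sx0; apply: sim0; apply/sim_s; rewrite s0 sx0; apply: sim_refl. Qed.

Lemma sim_scale_nat n x : sim (mscale n%:R (s x)) (s (mscale n%:R x)).
Proof.
have [-> | x_neq0] := classic (x = mzero).
  by rewrite mscaler0 s0 mscaler0; apply: sim_refl.
suff: sim (mscale n%:R (s x)) (s (mscale n%:R x)) /\
      sim (mscale n.+1%:R (s x)) (s (mscale n.+1%:R x)) by case.
elim: n => [|n [IHn IHn1]]; split => //.
- by rewrite mulr0n !mscale0r s0; apply: sim_refl.
- by rewrite mulr1n !mscale1r; apply: sim_refl.
- have /spm P : pm_rel (mscale n.+1%:R x) x (mscale n.+2%:R x) by left; M_ring.
  case: (pm_rel_sim_add P IHn1 (sim_refl (s x))) => H.
    by rewrite (_ : mscale _ (s x) = madd (mscale n.+1%:R (s x)) (s x)) //; M_ring.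
  rewrite (_ : madd _ _ = mscale n%:R (s x)) in H; last by M_ring.
  have /sim_s/sim_mscale : sim (s (mscale n%:R x)) (s (mscale n.+2%:R x)).
    exact: sim_trans (sim_sym IHn) H.
  have n_ge0 := ler0n rat n.
  by case=> // e; exfalso; move: e; lra.
Qed.

Lemma sim_scale_ge0 q x : 0 <= q -> sim (mscale q (s x)) (s (mscale q x)).
Proof.
case/ge0_rat_frac=> k [d [d_gt0 ->]].
have d_neq0 : d%:R != 0 :> rat by rewrite pnatr_eq0 -lt0n.
set y := mscale _ x.
have dy : mscale d%:R y = mscale k%:R x by apply: M_ext => j /=; field.
have := sim_scale_nat d y; rewrite dy => /sim_trans/(_ (sim_sym (sim_scale_nat k x))).
move/(sim_scale d%:R^-1); rewrite !mscalerA mulVf // mscale1r mulrC.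
exact: sim_sym.
Qed.

Lemma sim_scale_rat q x : sim (mscale q (s x)) (s (mscale q x)).
Proof.
have [q_ge0 | q_lt0] := lerP 0 q; first exact: sim_scale_ge0.
have Nq_ge0 : 0 <= - q by rewrite oppr_ge0 ltW.
apply: sim_trans (sim_trans _ (sim_scale_ge0 x Nq_ge0)) _.
- by exists (-1); [right | M_ring].
- by apply/sim_s; exists (-1); [right | M_ring].
Qed.

Definition bvec (n : nat) : M :=
  if n is 0 then s (ev 0) else
  if excluded_middle_informative
       (sim (madd (s (ev 0)) (s (ev n))) (s (madd (ev 0) (ev n))))
  then s (ev n) else mopp (s (ev n)).

Fixpoint lin_upto (N : nat) (x : M) : M :=
  if N is N'.+1 then madd (lin_upto N' x) (mscale (sval x N') (bvec N')) else mzero.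

Lemma lin_uptoD N x y : lin_upto N (madd x y) = madd (lin_upto N x) (lin_upto N y).
Proof. by elim: N => [|N IH] /=; [|rewrite IH]; M_ring. Qed.

Lemma lin_uptoZ N c x : lin_upto N (mscale c x) = mscale c (lin_upto N x).
Proof. by elim: N => [|N IH] /=; [|rewrite IH]; M_ring. Qed.

Lemma lin_upto_supp K N x : supp K x -> (K <= N)%N -> lin_upto N x = lin_upto K x.
Proof.
move=> sx; elim: N => [|N IH]; first by rewrite leqn0 => /eqP ->.
rewrite leq_eqVlt => /orP [/eqP -> // | KN].
by rewrite /= IH // sx //; M_ring.
Qed.

Lemma lin_upto_eq0 N x : (forall k, (k < N)%N -> sval x k = 0) -> lin_upto N x = mzero.
Proof.
elim: N => [|N IH] x0 //=.
rewrite IH => [|k kN]; last by apply: x0; apply: ltnW.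
by rewrite x0 //; M_ring.
Qed.

Definition F (x : M) : M := lin_upto (supp_bound x) x.

Lemma F_lin K x : supp K x -> F x = lin_upto K x.
Proof.
move=> sx; rewrite /F -(@lin_upto_supp _ (maxn K (supp_bound x))) ?leq_maxr //;
  last exact: supp_boundP.
by rewrite (@lin_upto_supp K) // leq_maxl.
Qed.

Lemma FD x y : F (madd x y) = madd (F x) (F y).
Proof.
pose K := maxn (supp_bound x) (supp_bound y).
have sx : supp K x by move=> n /(leq_trans (leq_maxl _ _)); apply: supp_boundP.
have sy : supp K y by move=> n /(leq_trans (leq_maxr _ _)); apply: supp_boundP.
rewrite (F_lin sx) (F_lin sy) (@F_lin K) ?lin_uptoD // => n Kn /=.
by rewrite sx // sy // addr0.
Qed.

Lemma FZ c x : F (mscale c x) = mscale c (F x).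
Proof.
rewrite (@F_lin (supp_bound x)) ?lin_uptoZ ?(F_lin (@supp_boundP x)) // => n bn /=.
by rewrite supp_boundP // mulr0.
Qed.

Lemma F_ev n : F (ev n) = bvec n.
Proof.
rewrite (F_lin (@supp_ev n)) /= lin_upto_eq0 ?eqxx; first by M_ring.
by move=> k kn /=; rewrite ltn_eqF.
Qed.

Definition agrees (x : M) := sim (F x) (s x).

Lemma agreesZ q x : agrees x -> agrees (mscale q x).
Proof.
by move=> ax; rewrite /agrees FZ; apply: sim_trans (sim_scale q ax) (sim_scale_rat q x).
Qed.

Lemma agrees_ev n : agrees (ev n).
Proof.
rewrite /agrees F_ev; case: n => [|n] /=; first exact: sim_refl.
by case: excluded_middle_informative => ? /=; [apply: sim_refl | apply/sim_sym/sim_opp].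
Qed.

Lemma agrees_ev0D n : agrees (madd (ev 0) (ev n.+1)).
Proof.
rewrite /agrees FD !F_ev /=; case: excluded_middle_informative => //= nsim.
have /spm P : pm_rel (ev 0) (ev n.+1) (madd (ev 0) (ev n.+1)) by left.
by case: (pm_rel_sim_add P (sim_refl _) (sim_refl _)).
Qed.

Lemma agrees_add3 p e y : agrees p -> agrees e -> agrees y ->
  agrees (madd p e) -> agrees (madd e y) -> e <> mzero -> ~ sim p y ->
  agrees (madd (madd p e) y).
Proof.
move=> ap ae ay ape aey e_neq0 p_nsim_y.
have /spm P1 : pm_rel (madd p e) y (madd (madd p e) y) by left.
have /spm P2 : pm_rel p (madd e y) (madd (madd p e) y) by left; M_ring.
rewrite /agrees !FD.
have [|H1] := pm_rel_sim_add P1 ape ay; first by rewrite FD.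
have [|H2] := pm_rel_sim_add P2 ap aey.
  rewrite FD (_ : madd (madd (F p) (F e)) (F y) = madd (F p) (madd (F e) (F y))) //.
  by M_ring.
have := sim_trans H1 (sim_sym H2); rewrite !FD => -[t [] -> ept].
- have Fe0 : F e = mzero.
    by apply: M_ext => k; move/(congr1 (fun z => sval z k)): ept => /=; lra.
  by case: e_neq0; apply/s_eq0/sim0; rewrite -Fe0.
- have Fpy : F p = F y.
    by apply: M_ext => k; move/(congr1 (fun z => sval z k)): ept => /=; lra.
  by case: p_nsim_y; apply/sim_s; apply: sim_trans (sim_sym ap) _; rewrite Fpy.
Qed.

Lemma agrees_step N v c : (forall w, supp N w -> agrees w) -> supp N v ->
  agrees (madd v (mscale c (ev N))).
Proof.
move=> IH sv; have [-> | c_neq0] := eqVneq c 0.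
  by rewrite (_ : madd _ _ = v); [apply: IH | M_ring].
case: N IH sv => [|N] IH sv.
  rewrite (_ : madd _ _ = mscale c (ev 0)); first exact/agreesZ/agrees_ev.
  by apply: M_ext => k /=; rewrite sv //; ring.
set p := madd v (mscale (- c) (ev 0)).
set e := mscale c (ev 0); set y := mscale c (ev N.+1).
have sp : supp N.+1 p by move=> [|k] // Nk /=; rewrite sv //; ring.
have pe : madd p e = v by rewrite /p /e; M_ring.
have ey : madd e y = mscale c (madd (ev 0) (ev N.+1)) by rewrite /e /y; M_ring.
have e_neq0 : e <> mzero.
  by move/(congr1 (fun z => sval z 0)) => /=; apply/eqP; rewrite mulr1.
have p_nsim_y : ~ sim p y by apply: (nsim_supp sp); rewrite /= eqxx mulr1.
rewrite (_ : madd v _ = madd (madd p e) y); last by rewrite /p /e /y; M_ring.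
apply: agrees_add3 => //; rewrite ?pe ?ey.
- exact: IH.
- exact/agreesZ/agrees_ev.
- exact/agreesZ/agrees_ev.
- exact: IH.
- exact/agreesZ/agrees_ev0D.
Qed.

Lemma agrees_all x : agrees x.
Proof.
move: (supp_bound x) (@supp_boundP x) => N; elim: N x => [|N IH] x sx.
  rewrite (_ : x = mzero); last by apply: M_ext => n; rewrite sx.
  by rewrite /agrees (@F_lin 0) // s0; apply: sim_refl.
set c := sval x N; set v := madd x (mscale (- c) (ev N)).
rewrite (_ : x = madd v (mscale c (ev N))); last by M_ring.
apply: agrees_step IH _ => n Nn /=.
rewrite /c; case: eqP => [-> | /eqP nN]; first ring.
by rewrite sx ?ltn_neqAle 1?eq_sym ?nN //; ring.
Qed.

Lemma F_inj : injective F.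
Proof.
move=> x y Fxy; have := agrees_all (madd x (mopp y)).
rewrite /agrees FD /mopp FZ Fxy (_ : madd _ _ = mzero); last by M_ring.
move/sim0/s_eq0 => xy0; apply: M_ext => k.
by move/(congr1 (fun z => sval z k)): xy0 => /=; lra.
Qed.

Hypothesis s_perm : is_perm s.

Lemma F_surj w : exists x, F x = w.
Proof.
case: s_perm => si _ siK.
have := agrees_all (si w); rewrite /agrees siK => /simE [e|e].
- by exists (si w).
- by exists (mopp (si w)); rewrite {2}e; apply: FZ.
Qed.

Lemma F_bij : bijective F.
Proof.
pose Finv w := sval (constructive_indefinite_description _ (F_surj w)).
have FinvK : cancel Finv F.
  by move=> w; rewrite /Finv; case: constructive_indefinite_description.
by exists Finv => // x; apply: F_inj; rewrite FinvK.
Qed.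

Lemma in_GL_F : in_GL F.
Proof. by split; [apply: F_bij | split; [apply: FD | apply: FZ]]. Qed.

Lemma in_Spm_comp_Finv Finv : cancel F Finv -> cancel Finv F -> in_Spm (s \o Finv).
Proof.
move=> FK FinvK; case: s_perm => si sK siK; split.
  by exists (F \o si) => w /=; rewrite ?sK ?FinvK ?FK ?siK.
by move=> w /=; have := agrees_all (Finv w); rewrite /agrees FinvK => /simE.
Qed.

End Preserving.

Theorem mainTheorem13 (s : M -> M) (hs : is_perm s) :
  preserves_pm s <-> in_GLpm s.
Proof.
split; last exact: in_GLpm_preserves.
move=> spm; have [Finv FK FinvK] := F_bij spm hs.
apply: (@GLpm_comp (s \o Finv) (F s)).
- by right; apply: in_Spm_comp_Finv.
- by apply: (@GLpm_comp (F s) id); [left; apply: in_GL_F | apply: GLpm_id |].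
- by move=> x /=; rewrite FK.
Qed.
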